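(* A functional $\Lambda$-system algebra over a set $\mathcal{X}$ that has consistently chosen fixed points is composition-order invariant if and only if it is connection-order invariant.
   Context: Let $\Lambda,\mathcal{X}$ be sets. For finite disjoint $\mathcal{I},\mathcal{O}\subseteq\Lambda$ let $\mathfrak{S}_{\mathcal{I},\mathcal{O}}$ be a set of functions $s:\mathcal{X}^{\mathcal{I}}\to\mathcal{X}^{\mathcal{O}}$ ($\mathcal{X}^{\mathcal{I}}$ = functions $\mathcal{I}\to\mathcal{X}$) and $\mathfrak{S}$ their union. For $s\in\mathfrak{S}_{\mathcal{I},\mathcal{O}}$, $i\in\mathcal{I}$, $o\in\mathcal{O}$, $\mathbf{x}\in\mathcal{X}^{\mathcal{I}\setminus\{i\}}$ let $\mathrm{Fix}(s,i,o,\mathbf{x}):=\{x_i\in\mathcal{X}\mid s(\mathbf{x}\cup\{(i,x_i)\})(o)=x_i\}$. Let $\Gamma$ assign to each $s\in\mathfrak{S}_{\mathcal{I},\mathcal{O}}$ a set of unordered pairs $\{i,o\}$, $i\in\mathcal{I}$, $o\in\mathcal{O}$, with $\mathrm{Fix}(s,i,o,\mathbf{x})\neq\emptyset$ for all $\mathbf{x}$, and let $\phi$ be a family of functions $\phi^s_{i,o}:\mathcal{X}^{\mathcal{I}\setminus\{i\}}\to\mathcal{X}$ with $\phi^s_{i,o}(\mathbf{x})\in\mathrm{Fix}(s,i,o,\mathbf{x})$. Define $\lambda(s)=\mathcal{I}\cup\mathcal{O}$; $s_1\parallel s_2$ (for $s_j\in\mathfrak{S}_{\mathcal{I}_j,\mathcal{O}_j}$,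 all four sets pairwise disjoint) by $(s_1\parallel s_2)(\mathbf{x})(o_j)=s_j(\mathbf{x}|_{\mathcal{I}_j})(o_j)$; and $\gamma_{i,o}(s)(\mathbf{x})=s(\mathbf{x}\cup\{(i,\phi^s_{i,o}(\mathbf{x}))\})|_{\mathcal{O}\setminus\{o\}}$ for $\{i,o\}\in\Gamma(s)$. If $\mathfrak{S}$ is closed under $\parallel,\gamma$ and $\{i,o\}\in\Gamma(s_1\parallel s_2)\iff\{i,o\}\in\Gamma(s_j)$ for $i,o\in\lambda(s_j)$, the resulting $(\mathfrak{S},\lambda,\parallel,\Gamma,\gamma)$ is a functional $\Lambda$-system algebra over $\mathcal{X}$. It has consistently chosen fixed points if there exists such a family $\phi$ producing the same $(\mathfrak{S},\lambda,\parallel,\Gamma,\gamma)$ such that for all $s\in\mathfrak{S}_{\mathcal{I},\mathcal{O}}$, $s'\in\mathfrak{S}_{\mathcal{I}',\mathcal{O}'}$, $\{i,o\}\in\Gamma(s)\cap\Gamma(s')$, $\mathbf{x}\in\mathcal{X}^{\mathcal{I}\setminus\{i\}}$, $\mathbf{x}'\in\mathcal{X}^{\mathcal{I}'\setminus\{i\}}$: $\mathrm{Fix}(s,i,o,\mathbf{x})=\mathrm{Fix}(s',i,o,\mathbf{x}')$ implies $\phi^s_{i,o}(\mathbf{x})=\phi^{s'}_{i,o}(\mathbf{x}')$. $\Gamma$ permits reordering if for all $s$, $\{i,o\}\in\Gamma(s)$, $\{i',o'\}\in\Gamma(\gamma_{i,o}(s))$ we have $\{i',o'\}\in\Gamma(s)$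 and $\{i,o\}\in\Gamma(\gamma_{i',o'}(s))$; connection-order invariance means additionally $\gamma_{i',o'}(\gamma_{i,o}(s))=\gamma_{i,o}(\gamma_{i',o'}(s))$. Composition-order invariance means connection-order invariance, $\parallel$ associative and commutative, and $\gamma_{i,o}(s_1)\parallel s_2=\gamma_{i,o}(s_1\parallel s_2)$ whenever $\lambda(s_1)\cap\lambda(s_2)=\emptyset$ and $\{i,o\}\in\Gamma(s_1)$. *)

From HB Require Import structures.
From mathcomp Require Import all_boot finmap.
Unset Printing Implicit Defensive.
Local Open Scope fset_scope.

Section SystemAlgebra.
Context {L : choiceType} {X : Type}.

(* The index sets are part
   of the data (so lambda(s) = I \cup O is well defined). *)
Record sys := Sys {
  sI : {fset L};
  sO : {fset L};
  sfun : (sI -> X) -> (sO -> X) }.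

Definition lam (s : sys) : {fset L} := sI s `|` sO s.

Definition restr {A B : {fset L}} (H : B `<=` A) (y : A -> X) : B -> X :=
  fun b => y (fincl H b).

(* x \cup {(i, xi)} for x : X^{I \ {i}} *)
Definition ext {I : {fset L}} {i : L} (x : (I `\ i) -> X) (xi : X) : I -> X :=
  fun l => match insub (fsval l) with Some l' => x l' | None => xi end.

Definition outv {O : {fset L}} (y : O -> X) (o : L) : option X :=
  omap y (insub o).

Definition Fix (s : sys) (i o : L) (x : (sI s `\ i) -> X) (xi : X) : Prop :=
  outv (sfun s (ext x xi)) o = Some xi.

Lemma inU_r {A B : {fset L}} (a : A `|` B) : fsval a \notin A -> fsval a \in B.
Proof. by case: a => a /= /fsetUP [->|]. Qed.

Definition par (s1 s2 : sys) : sys :=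
  @Sys (sI s1 `|` sI s2) (sO s1 `|` sO s2)
    (fun x o =>
       (if fsval o \in sO s1 as b return (fsval o \in sO s1) = b -> X
        then fun h => sfun s1 (restr (fsubsetUl _ _) x) [` h]
        else fun h => sfun s2 (restr (fsubsetUr _ _) x)
                        [` inU_r o (negbT h)]) (erefl _)).

Definition fpfamily := forall (s : sys) (i o : L), ((sI s `\ i) -> X) -> X.

Definition gamma (phi : fpfamily) (i o : L) (s : sys) : sys :=
  @Sys (sI s `\ i) (sO s `\ o)
    (fun x => restr (fsubsetDl _ _) (sfun s (ext x (phi s i o x)))).

(* Gamma(s) is represented as a relation G s i o meaning {i,o} \in Gamma(s),
   oriented so that i is the input and o the output label. *)
Definition valid_family (S : sys -> Prop) (G : sys -> L -> L -> Prop)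
  (phi : fpfamily) : Prop :=
  forall s i o x, S s -> G s i o -> Fix s i o x (phi s i o x).

Definition functional_system_algebra (S : sys -> Prop)
  (G : sys -> L -> L -> Prop) (phi : fpfamily) : Prop :=
  (forall s, S s -> [disjoint sI s & sO s]) /\
  (forall s i o, S s -> G s i o ->
     [/\ i \in sI s, o \in sO s & forall x, exists xi, Fix s i o x xi]) /\
  valid_family S G phi /\
  (forall s1 s2, S s1 -> S s2 -> [disjoint lam s1 & lam s2] -> S (par s1 s2)) /\
  (forall s i o, S s -> G s i o -> S (gamma phi i o s)) /\
  (forall s1 s2, S s1 -> S s2 -> [disjoint lam s1 & lam s2] ->
         forall i o,
           (i \in lam s1 -> o \in lam s1 -> (G (par s1 s2) i o <-> G s1 i o)) /\
           (i \in lam s2 -> o \in lam s2 -> (G (par s1 s2) i o <-> G s2 i o))).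

Definition consistently_chosen_fixed_points (S : sys -> Prop)
  (G : sys -> L -> L -> Prop) (phi : fpfamily) : Prop :=
  exists phi' : fpfamily,
    [/\ valid_family S G phi',
        (forall s i o, S s -> G s i o -> gamma phi' i o s = gamma phi i o s) &
        (forall s s' i o (x : (sI s `\ i) -> X) (x' : (sI s' `\ i) -> X),
           S s -> S s' -> G s i o -> G s' i o ->
           (forall xi, Fix s i o x xi <-> Fix s' i o x' xi) ->
           phi' s i o x = phi' s' i o x')].

Definition permits_reordering (S : sys -> Prop) (G : sys -> L -> L -> Prop)
  (phi : fpfamily) : Prop :=
  forall s i o i' o', S s -> G s i o -> G (gamma phi i o s) i' o' ->
    G s i' o' /\ G (gamma phi i' o' s) i o.

Definition connection_order_invariant (S : sys -> Prop)
  (G : sys -> L -> L -> Prop) (phi : fpfamily) : Prop :=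
  permits_reordering S G phi /\
  forall s i o i' o', S s -> G s i o -> G (gamma phi i o s) i' o' ->
    gamma phi i' o' (gamma phi i o s) = gamma phi i o (gamma phi i' o' s).

Definition composition_order_invariant (S : sys -> Prop)
  (G : sys -> L -> L -> Prop) (phi : fpfamily) : Prop :=
  [/\ connection_order_invariant S G phi,
      (forall s1 s2 s3, S s1 -> S s2 -> S s3 ->
         [disjoint lam s1 & lam s2] -> [disjoint lam s1 & lam s3] ->
         [disjoint lam s2 & lam s3] ->
         par (par s1 s2) s3 = par s1 (par s2 s3)),
      (forall s1 s2, S s1 -> S s2 -> [disjoint lam s1 & lam s2] ->
         par s1 s2 = par s2 s1) &
      (forall s1 s2 i o, S s1 -> S s2 -> [disjoint lam s1 & lam s2] ->
         G s1 i o -> par (gamma phi i o s1) s2 = gamma phi i o (par s1 s2))].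

End SystemAlgebra.

From mathcomp Require Import all_boot finmap.
From Stdlib Require Import FunctionalExtensionality.
Local Open Scope fset_scope.

(* Composition-order invariance only adds to connection-order invariance the
   laws of [par] and its interchange with [gamma].  Associativity, and
   commutativity for disjoint output sets, hold for every functional system,
   label by label.  For the interchange, if {i,o} is a connection of s1 and s2
   is disjoint from s1, then s1 || s2 and s1 have the same fixed-point sets at
   (i,o): o is read off s1 and i is not an input of s2.  A consistently chosen
   family phi' thus picks the same fixed point in both, so connecting commutes
   with || for phi', and phi' induces the same connections as phi. *)

Section SystemAlgebraLaws.
Context {L : choiceType} {X : Type}.
Implicit Types s : @sys L X.

Definition agree {A B : {fset L}} (x : A -> X) (y : B -> X) :=
  forall a b, fsval a = fsval b -> x a = y b.

Lemma agree_eq {A : {fset L}} (x y : A -> X) : agree x y -> x = y.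
Proof. by move=> xy; apply: functional_extensionality => a; apply: xy. Qed.

Lemma agree_refl {A : {fset L}} (x : A -> X) : agree x x.
Proof. by move=> a b /val_inj ->. Qed.

Lemma agree_sym {A B : {fset L}} (x : A -> X) (y : B -> X) :
  agree x y -> agree y x.
Proof. by move=> xy a b e; rewrite (xy b a). Qed.

Lemma agree_restrl {A B C : {fset L}} (H : C `<=` A) (x : A -> X) (y : B -> X) :
  agree x y -> agree (restr H x) y.
Proof. by move=> xy a b e; apply: xy. Qed.

Lemma agree_restrr {A B C : {fset L}} (H : C `<=` B) (x : A -> X) (y : B -> X) :
  agree x y -> agree x (restr H y).
Proof. by move=> xy a b e; apply: xy. Qed.

Lemma sfun_agree s (x y : sI s -> X) : agree x y -> agree (sfun s x) (sfun s y).
Proof. by move=> /agree_eq ->; apply: agree_refl. Qed.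

Lemma ext_agree {I J : {fset L}} {i : L} {x : (I `\ i) -> X} {y : (J `\ i) -> X}
  (xi : X) : agree x y -> agree (ext x xi) (ext y xi).
Proof.
move=> xy a b e; rewrite /ext.
case: insubP => [u Pu Hu|Nu]; case: insubP => [v Pv Hv|Nv] //.
- by apply: xy; rewrite Hu Hv.
- by move: Pu Nv; rewrite !in_fsetD1 (fsvalP a) (fsvalP b) e => ->.
- by move: Pv Nu; rewrite !in_fsetD1 (fsvalP a) (fsvalP b) e => ->.
Qed.

Lemma extE {I : {fset L}} {i : L} {x : (I `\ i) -> X} {xi : X} {c : I} (d : I `\ i) :
  fsval c = fsval d -> ext x xi c = x d.
Proof.
move=> e; rewrite /ext; case: insubP => [u _ Hu|].
- by congr x; apply: val_inj; rewrite Hu.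
- by rewrite e (fsvalP d).
Qed.

Lemma outv_agree {O O' : {fset L}} {y : O -> X} {z : O' -> X} {o : L} :
  o \in O -> o \in O' -> agree y z -> outv y o = outv z o.
Proof.
move=> oO oO' yz; rewrite /outv (insubT (mem O) oO) (insubT (mem O') oO') /=.
by congr Some; apply: yz.
Qed.

Lemma fsetD1Ul (A B : {fset L}) (l : L) : l \notin B -> (A `\ l) `|` B = (A `|` B) `\ l.
Proof.
move=> lB; apply/fsetP => k; rewrite !(in_fsetU, in_fsetD1).
by case: (eqVneq k l) => [->|]; rewrite ?(negbTE lB).
Qed.

Lemma sys_ext s1 s2 : sI s1 = sI s2 -> sO s1 = sO s2 ->
  (forall x1 x2, agree x1 x2 -> agree (sfun s1 x1) (sfun s2 x2)) -> s1 = s2.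
Proof.
case: s1 s2 => I1 O1 f1 [I2 O2 f2] /= eI eO; subst => f12.
congr Sys; apply: functional_extensionality => x.
exact/agree_eq/f12/agree_refl.
Qed.

Lemma sfun_parl {s1 s2 x} (a : sO (par s1 s2)) (h : fsval a \in sO s1) :
  sfun (par s1 s2) x a = sfun s1 (restr (fsubsetUl _ _) x) [` h].
Proof.
(* Rewrite the scrutinee of the dependent [if] together with the type of the
   equation it is applied to, so that the match stays well typed. *)
rewrite /=; move: (erefl _); rewrite {2 3}h => e.
by rewrite (bool_irrelevance e h).
Qed.

Lemma sfun_parr {s1 s2 x} (a : sO (par s1 s2)) (h : fsval a \notin sO s1) :
  sfun (par s1 s2) x a = sfun s2 (restr (fsubsetUr _ _) x) [` inU_r a h].
Proof.
rewrite /=; move: (erefl _); rewrite {2 3}(negbTE h) => e.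
by rewrite (bool_irrelevance (negbT e) h).
Qed.

Lemma agree_sfun_parl {s1 s2 x} {y : sI s1 -> X} :
  agree x y -> agree (sfun (par s1 s2) x) (sfun s1 y).
Proof.
move=> xy a b e; have h : fsval a \in sO s1 by rewrite e (fsvalP b).
rewrite (sfun_parl _ h); apply: sfun_agree => //.
exact: agree_restrl.
Qed.

Lemma sfun_gamma {psi : fpfamily} {i o s x} {a : sO (gamma psi i o s)} (b : sO s) :
  fsval a = fsval b -> sfun (gamma psi i o s) x a = sfun s (ext x (psi s i o x)) b.
Proof. by move=> e; rewrite /= /restr; congr sfun; apply: val_inj. Qed.

Lemma parA s1 s2 s3 : par (par s1 s2) s3 = par s1 (par s2 s3).
Proof.
apply: sys_ext => [||x1 x2 x12 a b e]; [by rewrite /= fsetUA | by rewrite /= fsetUA |].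
case: (boolP (fsval a \in sO s1)) => [h1|h1].
  have h12 : fsval a \in sO s1 `|` sO s2 by rewrite in_fsetU h1.
  have h1' : fsval b \in sO s1 by rewrite -e.
  rewrite (sfun_parl _ h12) (sfun_parl [` h12] h1) (sfun_parl _ h1').
  by apply: sfun_agree => //; do 2 apply: agree_restrl; apply: agree_restrr.
have h1' : fsval b \notin sO s1 by rewrite -e.
rewrite (sfun_parr _ h1').
case: (boolP (fsval a \in sO s2)) => [h2|h2].
  have h12 : fsval a \in sO s1 `|` sO s2 by rewrite in_fsetU h2 orbT.
  have h2' : fsval b \in sO s2 by rewrite -e.
  rewrite (sfun_parl _ h12) (sfun_parr [` h12] h1) (sfun_parl [` inU_r b h1'] h2').
  by apply: sfun_agree => //; do 2 apply: agree_restrl; do 2 apply: agree_restrr.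
have h12 : fsval a \notin sO s1 `|` sO s2 by rewrite in_fsetU negb_or h1 h2.
have h2' : fsval b \notin sO s2 by rewrite -e.
rewrite (sfun_parr _ h12) (sfun_parr [` inU_r b h1'] h2').
by apply: sfun_agree => //; apply: agree_restrl; do 2 apply: agree_restrr.
Qed.

Lemma parC s1 s2 : [disjoint sO s1 & sO s2] -> par s1 s2 = par s2 s1.
Proof.
move=> /fdisjointP O12.
apply: sys_ext => [||x1 x2 x12 a b e]; [by rewrite /= fsetUC | by rewrite /= fsetUC |].
case: (boolP (fsval a \in sO s1)) => [h1|h1].
  have h2 : fsval b \notin sO s2 by rewrite -e O12.
  rewrite (sfun_parl _ h1) (sfun_parr _ h2).
  by apply: sfun_agree => //; apply/agree_restrl/agree_restrr.
have h2 : fsval b \in sO s2 by rewrite -e (inU_r a h1).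
rewrite (sfun_parr _ h1) (sfun_parl _ h2).
by apply: sfun_agree => //; apply/agree_restrl/agree_restrr.
Qed.

Lemma Fix_parl s1 s2 i o (x : sI (par s1 s2) `\ i -> X) (y : sI s1 `\ i -> X)
  (xi : X) : o \in sO s1 -> agree x y -> Fix (par s1 s2) i o x xi <-> Fix s1 i o y xi.
Proof.
move=> oO1 xy; rewrite /Fix (outv_agree _ oO1 (agree_sfun_parl (ext_agree xi xy))) //.
by rewrite /= in_fsetU oO1.
Qed.

Lemma gamma_parl (psi : fpfamily) s1 s2 i o : i \notin sI s2 -> o \notin sO s2 ->
  (forall x y, agree x y -> psi (par s1 s2) i o x = psi s1 i o y) ->
  par (gamma psi i o s1) s2 = gamma psi i o (par s1 s2).
Proof.
move=> iI2 oO2 psi_par.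
apply: sys_ext => [||x1 x2 x12 a b e]; [exact: fsetD1Ul | exact: fsetD1Ul |].
have /fsetD1P[b_o bO] := fsvalP b.
case: (boolP (fsval a \in sO s1 `\ o)) => [h1|h1].
  have /fsetD1P[_ aO1] := h1.
  have bO1 : fsval b \in sO s1 by rewrite -e.
  rewrite (sfun_parl _ h1) (sfun_gamma ([` aO1] : sO s1)) //.
  rewrite (sfun_gamma ([` bO] : sO (par s1 s2))) // (sfun_parl [` bO] bO1).
  rewrite (psi_par x2 (restr (fsubsetUl _ _) x1)); last exact/agree_restrr/agree_sym.
  apply: sfun_agree => //; apply: agree_restrr; apply: ext_agree; exact: agree_restrl.
have bO1 : fsval b \notin sO s1 by move: h1; rewrite e in_fsetD1 b_o.
rewrite (sfun_parr _ h1) (sfun_gamma ([` bO] : sO (par s1 s2))) //.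
rewrite (sfun_parr [` bO] bO1).
apply: sfun_agree => // c d e'; rewrite /restr.
have dI : fsval d \in (sI s1 `|` sI s2) `\ i.
  by rewrite in_fsetD1 in_fsetU (fsvalP d) orbT andbT; apply: contraNneq iI2 => <-.
by rewrite (x12 _ [` dI]) // (extE [` dI]).
Qed.

End SystemAlgebraLaws.

Theorem lemma4p6 (L : choiceType) (X : Type) (S : @sys L X -> Prop)
  (G : @sys L X -> L -> L -> Prop) (phi : @fpfamily L X) :
  functional_system_algebra S G phi ->
  consistently_chosen_fixed_points S G phi ->
  (composition_order_invariant S G phi <-> connection_order_invariant S G phi).
Proof.
move=> [_ [G_io [_ [S_par [_ G_par]]]]] [phi' [_ gamma_phi' phi'_cons]].
split=> [[] //|coi]; split=> // [s1 s2 s3 *|s1 s2 _ _|s1 s2 i o S1 S2 D G1].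
- exact: parA.
- by rewrite /lam fdisjointUX !fdisjointXU => /andP[_ /andP[_ /parC]].
have [iI1 oO1 _] := G_io _ _ _ S1 G1.
have S12 := S_par _ _ S1 S2 D.
have G12 : G (par s1 s2) i o.
  have iL1 : i \in lam s1 by rewrite in_fsetU iI1.
  have oL1 : o \in lam s1 by rewrite in_fsetU oO1 orbT.
  exact/((G_par _ _ S1 S2 D i o).1 iL1 oL1).
move: (D); rewrite /lam fdisjointUX !fdisjointXU.
move=> /andP[/andP[/fdisjointP I12 _] /andP[_ /fdisjointP O12]].
rewrite -(gamma_phi' _ _ _ S1 G1) -(gamma_phi' _ _ _ S12 G12).
apply: gamma_parl; [exact: I12 | exact: O12 | move=> x y xy].
by apply: phi'_cons => // xi; apply: Fix_parl.
Qed.
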